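(* Let $G=(V,E)$ be an entropy-minimal finite simple graph. Then for every nonempty $S\subseteq V$, the bipartite graph $G[c(S),S]$ has no matching saturating $S$.
   Context: For an integer $q \ge 2$ let $[q]=\{0,\dots,q-1\}$. For $f=(f_1,\dots,f_n):[q]^n\to[q]^n$, the interaction graph $\mathrm{IG}(f)$ is the digraph on $\{1,\dots,n\}$ with an arc $(u,v)$ iff $f_v$ depends essentially on $x_u$ (there exist $a,b\in[q]^n$ differing only in coordinate $u$ with $f_v(a)\ne f_v(b)$). A simple graph is viewed as the digraph with both arcs for each edge and no loops. The $q$-guessing number is $\mathrm{gn}(G,q)=\max\{\log_q|\mathrm{Fix}(f)| : \mathrm{IG}(f)\subseteq G\}$ and the entropy is $H(G)=\sup_{q\ge2}\mathrm{gn}(G,q)$. A simple graph $G$ is entropy-minimal if for every simple graph $G'$ with fewer vertices than $G$, $H(G')-\lfloor H(G')\rfloor \ne H(G)-\lfloor H(G)\rfloor$. For nonempty $S\subseteq V$, $c(S)=\{v\in V\setminus S : N(v)\subseteq S\}$, where $N(v)$ is the neighbourhood of $v$. For disjoint $S,T$, $G[S,T]$ is the bipartite graph with parts $S,T$ and the edges of $G$ between $S$ and $T$; a matching saturates $S$ if it covers every vertex of $S$. *)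

From mathcomp Require Import all_boot.
From Stdlib Require Import Reals.
Set Implicit Arguments. Unset Strict Implicit. Unset Printing Implicit Defensive.

Definition simple_graph (n : nat) (e : rel 'I_n) : Prop :=
  symmetric e /\ irreflexive e.

Definition config (n q : nat) := {ffun 'I_n -> 'I_q}.
Definition netmap (n q : nat) := {ffun config n q -> config n q}.

Definition depends (n q : nat) (f : netmap n q) (u v : 'I_n) : bool :=
  [exists a : config n q, exists b : config n q,
     [forall w : 'I_n, (w != u) ==> (a w == b w)] && (f a v != f b v)].

Definition IG_sub (n q : nat) (e : rel 'I_n) (f : netmap n q) : bool :=
  [forall u : 'I_n, forall v : 'I_n, depends f u v ==> e u v].

Definition Fix (n q : nat) (f : netmap n q) : {set config n q} :=
  [set x | f x == x].

Definition maxfix (n q : nat) (e : rel 'I_n) : nat :=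
  \max_(f : netmap n q | IG_sub e f) #|Fix f|.

Definition gn (n : nat) (e : rel 'I_n) (q : nat) : R :=
  (ln (INR (maxfix q e)) / ln (INR q))%R.

Definition is_entropy (n : nat) (e : rel 'I_n) (h : R) : Prop :=
  is_lub (fun x => exists q : nat, (2 <= q)%N /\ x = gn e q) h.

Definition entropy_minimal (n : nat) (e : rel 'I_n) : Prop :=
  forall (m : nat) (e' : rel 'I_m), (m < n)%N -> simple_graph e' ->
  forall h h' : R, is_entropy e h -> is_entropy e' h' ->
  frac_part h' <> frac_part h.

Definition cset (n : nat) (e : rel 'I_n) (S : {set 'I_n}) : {set 'I_n} :=
  [set v | (v \notin S) && [forall u, e v u ==> (u \in S)]].

Definition bip_matching (n : nat) (e : rel 'I_n) (S T : {set 'I_n})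
  (M : {set 'I_n * 'I_n}) : Prop :=
  (forall p, p \in M -> [/\ p.1 \in S, p.2 \in T & e p.1 p.2]) /\
  (forall p p', p \in M -> p' \in M -> p != p' ->
     [disjoint [set p.1; p.2] & [set p'.1; p'.2]]).

Definition saturates (n : nat) (M : {set 'I_n * 'I_n}) (S : {set 'I_n}) : Prop :=
  forall s, s \in S -> exists2 p, p \in M & s \in [set p.1; p.2].

From Stdlib Require Import Reals Lra.
From mathcomp Require Import all_boot.
Set Implicit Arguments. Unset Strict Implicit. Unset Printing Implicit Defensive.

(** A matching of [S] into [c(S)] gives an injection [mu : S -> c(S)] along
   edges, and then [max |Fix f|] on [G] is exactly [q^|S|] times the same
   maximum on [G - S], for every [q]. Upper bound: fixing the values on [S]
   slices a network on [G] into a network on [G - S]. Lower bound: a network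
   on [G - S] lifts to [G] by letting [s] copy [mu s] and [mu s] copy [s]; the
   vertices [mu s] are isolated in [G - S], so the lifted map loses no fixed
   points, and the values on [S] are free. Hence [H(G) = |S| + H(G - S)], and
   [G - S] is a smaller graph whose entropy has the same fractional part. *)

Lemma dependsP n q (f : netmap n q) u v :
  reflect (exists a b : config n q,
             (forall w, w != u -> a w = b w) /\ f a v != f b v)
          (depends f u v).
Proof.
apply: (iffP existsP) => [[a /existsP [b /andP [/forallP agree neq]]]|].
  by exists a, b; split=> // w wu; apply/eqP/(implyP (agree w)).
case=> a [b [agree neq]]; exists a; apply/existsP; exists b.
by rewrite neq andbT; apply/forallP => w; apply/implyP => wu; apply/eqP/agree.
Qed.

Lemma IG_subP n q (e : rel 'I_n) (f : netmap n q) :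
  reflect (forall u v, depends f u v -> e u v) (IG_sub e f).
Proof.
apply: (iffP forallP) => [sub u v|sub u].
  by move/(implyP (forallP (sub u) v)).
by apply/forallP => v; apply/implyP/sub.
Qed.

Lemma card_config n q : #|config n q| = q ^ n.
Proof. by rewrite card_ffun !card_ord. Qed.

Lemma netmap_local n q (f : netmap n q) v (P : pred 'I_n) :
  (forall u, ~~ P u -> ~~ depends f u v) ->
  forall a b : config n q, {in P, a =1 b} -> f a v = f b v.
Proof.
move=> indep; suff local k (a b : config n q) :
    #|[set u | a u != b u]| <= k -> {in P, a =1 b} -> f a v = f b v.
  by move=> a b; apply: local (leqnn _).
elim: k a b => [|k IHk] a b.
  rewrite leqn0 cards_eq0 => /eqP diff0 _; congr (f _ v); apply/ffunP => u.
  by move/setP/(_ u): diff0; rewrite !inE => /negbFE/eqP.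
move=> le_diff agreeP; have [-> //|neq_ab] := eqVneq a b.
have [u neq_u] : exists u, a u != b u.
  apply/existsP; apply: contraNT neq_ab => /existsPn ab.
  by apply/eqP/ffunP => w; apply/eqP/negbNE/ab.
pose a' : config n q := [ffun w => if w == u then b u else a w].
have notPu : ~~ P u by apply: contra neq_u => Pu; apply/eqP/agreeP.
have -> : f a v = f a' v.
  apply/eqP/negP => /negP neq; case/negP: (indep u notPu); apply/dependsP.
  by exists a, a'; split=> // w wu; rewrite ffunE (negbTE wu).
apply: IHk => [|w Pw]; last by rewrite ffunE; case: eqP => [->|_]; rewrite ?agreeP.
have diff_sub : [set w | a' w != b w] \subset [set w | a w != b w] :\ u.
  by apply/subsetP => w; rewrite !inE ffunE; case: (w =P u) => [->|_]; rewrite ?eqxx.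
rewrite -ltnS; apply: leq_trans le_diff.
by rewrite [X in _ < X](cardsD1 u) inE neq_u ltnS subset_leq_card.
Qed.

Lemma leq_maxfix n q (e : rel 'I_n) (f : netmap n q) :
  IG_sub e f -> #|Fix f| <= maxfix q e.
Proof. exact: (@leq_bigmax_cond _ (IG_sub e) (fun f => #|Fix f|)). Qed.

Lemma maxfix_le_expn n q (e : rel 'I_n) : maxfix q e <= q ^ n.
Proof. by apply/bigmax_leqP => f _; rewrite -card_config max_card. Qed.

Lemma IG_sub_const n q (e : rel 'I_n) (c : config n q) : IG_sub e [ffun=> c].
Proof. by apply/IG_subP => u v /dependsP [a [b [_]]]; rewrite !ffunE eqxx. Qed.

Lemma maxfix_gt0 n q (e : rel 'I_n) : 0 < q -> 0 < maxfix q e.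
Proof.
move=> q_gt0; pose c : config n q := [ffun=> Ordinal q_gt0].
apply: leq_trans (leq_maxfix (IG_sub_const e c)).
by apply/card_gt0P; exists c; rewrite inE ffunE.
Qed.

Lemma maxfix_attained n q (e : rel 'I_n) : 0 < q ->
  exists2 f : netmap n q, IG_sub e f & maxfix q e = #|Fix f|.
Proof.
move=> q_gt0; pose c : config n q := [ffun=> Ordinal q_gt0].
have : 0 < #|[pred f : netmap n q | IG_sub e f]|.
  by apply/card_gt0P; exists [ffun=> c]; apply: IG_sub_const.
by case/(eq_bigmax_cond (fun f : netmap n q => #|Fix f|)) => f; exists f.
Qed.

Lemma card_fibers (T J : finType) (A : {set T}) (h : T -> J) :
  #|A| = \sum_(y : J) #|[set x in A | h x == y]|.
Proof.
rewrite -sum1_card (partition_big h xpredT) //=.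
by apply: eq_bigr => y _; rewrite -sum1_card; apply: eq_bigl => x; rewrite inE.
Qed.

Definition induced n (e : rel 'I_n) (W : {set 'I_n}) : rel 'I_#|W| :=
  fun i j => e (enum_val i) (enum_val j).
Arguments induced [n] e W.

Lemma induced_simple n (e : rel 'I_n) (W : {set 'I_n}) :
  simple_graph e -> simple_graph (induced e W).
Proof. by case=> sym irr; split=> [i j|i]; [apply: sym | apply: irr]. Qed.

Definition restrict n q (A : {set 'I_n}) (x : config n q) : config #|A| q :=
  [ffun i => x (enum_val i)].
Arguments restrict [n q] A x.

Lemma csetP n (e : rel 'I_n) (S : {set 'I_n}) t :
  reflect (t \notin S /\ forall u, e t u -> u \in S) (t \in cset e S).
Proof.
rewrite inE; apply: (iffP andP) => [[tS /forallP nbhd]|[tS nbhd]].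
  by split=> // u; apply/implyP/nbhd.
by split=> //; apply/forallP => u; apply/implyP/nbhd.
Qed.

Lemma cset_disjoint n (e : rel 'I_n) (S : {set 'I_n}) : [disjoint S & cset e S].
Proof. by apply/pred0P => t /=; apply/andP => -[tS /csetP [/negP]]. Qed.

Section Splitting.

(* [s0] and [w0] only supply the default values required by [enum_rank_in]. *)
Variables (n q : nat) (e : rel 'I_n) (S : {set 'I_n}) (s0 w0 : 'I_n).
Hypotheses (s0S : s0 \in S) (w0W : w0 \in ~: S).

Local Notation W := (~: S).
Local Notation rankS := (enum_rank_in s0S).
Local Notation rankW := (enum_rank_in w0W).

Lemma enum_val_notin_S (j : 'I_#|W|) : enum_val j \notin S.
Proof. by have := enum_valP j; rewrite inE. Qed.

Definition glue (y : config #|S| q) (z : config #|W| q) : config n q :=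
  [ffun v => if v \in S then y (rankS v) else z (rankW v)].

Lemma glue_restrict x : glue (restrict S x) (restrict W x) = x.
Proof.
by apply/ffunP => v; rewrite !ffunE; case: ifPn => vS;
  rewrite enum_rankK_in // inE.
Qed.

Definition slice (f : netmap n q) (y : config #|S| q) : netmap #|W| q :=
  [ffun z => restrict W (f (glue y z))].

Lemma IG_sub_slice f y : IG_sub e f -> IG_sub (induced e W) (slice f y).
Proof.
move/IG_subP => sub; apply/IG_subP => u v /dependsP [a [b [agree]]].
rewrite /slice !ffunE => neq; apply: sub; apply/dependsP.
exists (glue y a), (glue y b); split=> // w wu; rewrite !ffunE.
case: ifPn => // wS; apply: agree; apply: contra wu => /eqP <-.
by rewrite enum_rankK_in // inE.
Qed.

Lemma card_fiber_le_Fix_slice f y :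
  #|[set x in Fix f | restrict S x == y]| <= #|Fix (slice f y)|.
Proof.
rewrite -(card_in_imset (f := restrict W)); last first.
  move=> x1 x2; rewrite !inE => /andP [_ /eqP y1] /andP [_ /eqP y2] eqW.
  by rewrite -(glue_restrict x1) -(glue_restrict x2) y1 y2 eqW.
apply/subset_leq_card/subsetP => z /imsetP [x].
by rewrite !inE => /andP [/eqP fx /eqP <-] ->; rewrite ffunE glue_restrict fx.
Qed.

Lemma maxfix_le_split : maxfix q e <= q ^ #|S| * maxfix q (induced e W).
Proof.
apply/bigmax_leqP => f sub.
rewrite (card_fibers _ (restrict S)) -card_config -sum_nat_const.
apply: leq_sum => y _; apply: leq_trans (card_fiber_le_Fix_slice f y) _.
exact/leq_maxfix/IG_sub_slice.
Qed.

Section Lift.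

Variable mu : 'I_n -> 'I_n.
Hypotheses (e_sym : symmetric e) (mu_cset : {in S, forall s, mu s \in cset e S})
  (mu_adj : {in S, forall s, e s (mu s)}) (mu_inj : {in S &, injective mu}).

Local Notation T := (mu @: S).
Let nu t := odflt t [pick s in S | mu s == t].

Let nu_mu : {in S, forall s, nu (mu s) = s}.
Proof.
move=> s sS; rewrite /nu; case: pickP => [s' /andP [s'S /eqP eq_mu]|/(_ s)].
  exact: mu_inj.
by rewrite sS eqxx.
Qed.

Let nu_in_S t : t \in T -> nu t \in S.
Proof. by case/imsetP => s sS ->; rewrite nu_mu. Qed.

Let mu_nu t : t \in T -> mu (nu t) = t.
Proof. by case/imsetP => s sS ->; rewrite nu_mu. Qed.

Let T_cset t : t \in T -> t \in cset e S.
Proof. by case/imsetP => s sS ->; apply: mu_cset. Qed.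

Lemma induced_T_isolated i j :
  (enum_val i \in T) || (enum_val j \in T) -> ~~ induced e W i j.
Proof.
rewrite /induced; case/orP => /T_cset /csetP [_ nbhd]; apply/negP.
  by move/nbhd; apply/negP/enum_val_notin_S.
by rewrite e_sym => /nbhd; apply/negP/enum_val_notin_S.
Qed.

Lemma nodep_T (f' : netmap #|W| q) i j : IG_sub (induced e W) f' ->
  (enum_val i \in T) || (enum_val j \in T) -> ~~ depends f' i j.
Proof. by move/IG_subP => sub /induced_T_isolated; apply: contraNN (sub i j). Qed.

Definition lift (f' : netmap #|W| q) : netmap n q :=
  [ffun x : config n q => [ffun v => if v \in S then x (mu v)
                                     else if v \in T then x (nu v)
                                     else f' (restrict W x) (rankW v)]].

Lemma IG_sub_lift f' : IG_sub (induced e W) f' -> IG_sub e (lift f').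
Proof.
move/IG_subP => sub'; apply/IG_subP => u v /dependsP [a [b [agree]]].
rewrite !ffunE; case: ifPn => vS.
  have [<- _|neq] := eqVneq (mu v) u; last by rewrite agree ?eqxx.
  by rewrite e_sym mu_adj.
case: ifPn => vT.
  have [<- _|neq] := eqVneq (nu v) u; last by rewrite agree ?eqxx.
  by have := mu_adj (nu_in_S vT); rewrite mu_nu.
have [uS neq|uS neq] := boolP (u \in S).
  case/eqP: neq; congr (f' _ _); apply/ffunP => j; rewrite !ffunE agree //.
  by apply: contraNneq (enum_val_notin_S j) => ->.
have /sub' : depends f' (rankW u) (rankW v).
  apply/dependsP; exists (restrict W a), (restrict W b); split=> // j ju.
  by rewrite !ffunE agree //; apply: contra ju => /eqP <-; rewrite enum_valK_in.
by rewrite /induced !enum_rankK_in ?inE.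
Qed.

Definition embed (y : config #|S| q) (z : config #|W| q) : config n q :=
  [ffun v => if v \in S then y (rankS v)
             else if v \in T then y (rankS (nu v)) else z (rankW v)].

Lemma restrict_embed y z : restrict S (embed y z) = y.
Proof. by apply/ffunP => i; rewrite !ffunE enum_valP enum_valK_in. Qed.

Lemma restrict_embed_notin_T y z j :
  enum_val j \notin T -> restrict W (embed y z) j = z j.
Proof.
by move=> jT; rewrite !ffunE (negbTE (enum_val_notin_S j)) (negbTE jT) enum_valK_in.
Qed.

Section Embedding.

Variables (f' : netmap #|W| q) (y : config #|S| q).
Hypothesis sub' : IG_sub (induced e W) f'.

Lemma embed_Fix z : z \in Fix f' -> embed y z \in Fix (lift f').
Proof.
rewrite !inE => /eqP fz; apply/eqP/ffunP => v; rewrite !ffunE.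
case: ifPn => vS.
  have muT : mu v \in T by apply: imset_f.
  by have /csetP [/negbTE -> _] := T_cset muT; rewrite muT nu_mu.
case: ifPn => vT; first by rewrite nu_in_S.
rewrite -[in RHS]fz; apply: (@netmap_local _ _ f' _ [pred u | enum_val u \notin T]).
  by move=> u /negbNE uT; apply: (nodep_T sub'); rewrite uT.
by move=> u uT; apply: restrict_embed_notin_T.
Qed.

Lemma embed_inj : {in Fix f' &, injective (embed y)}.
Proof.
move=> z1 z2; rewrite !inE => /eqP fz1 /eqP fz2 eq_embed; apply/ffunP => j.
have [jT|jT] := boolP (enum_val j \in T).
  (* [j] is isolated in [G - S], so [f'] is constant at [j]. *)
  rewrite -fz1 -fz2; apply: (@netmap_local _ _ f' j pred0) => [u _|//].
  by apply: (nodep_T sub'); rewrite jT orbT.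
by rewrite -(restrict_embed_notin_T y z1 jT) -(restrict_embed_notin_T y z2 jT) eq_embed.
Qed.

Lemma card_Fix_le_fiber_lift :
  #|Fix f'| <= #|[set x in Fix (lift f') | restrict S x == y]|.
Proof.
rewrite -(card_in_imset embed_inj); apply/subset_leq_card/subsetP => x.
by case/imsetP => z zfix ->; rewrite inE embed_Fix // restrict_embed eqxx.
Qed.

End Embedding.

Lemma maxfix_ge_split : 0 < q -> q ^ #|S| * maxfix q (induced e W) <= maxfix q e.
Proof.
move=> q_gt0; have [f' sub' ->] := maxfix_attained (induced e W) q_gt0.
apply: leq_trans (leq_maxfix (IG_sub_lift sub')).
rewrite (card_fibers _ (restrict S)) -card_config -sum_nat_const.
by apply: leq_sum => y _; apply: card_Fix_le_fiber_lift.
Qed.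

End Lift.

End Splitting.

Lemma matching_injection n (e : rel 'I_n) (S T : {set 'I_n}) M :
  [disjoint S & T] -> bip_matching e S T M -> saturates M S ->
  exists mu : 'I_n -> 'I_n, [/\ {in S, forall s, mu s \in T},
    {in S, forall s, e s (mu s)} & {in S &, injective mu}].
Proof.
move=> disjST [edges disj] sat.
pose mu s := if [pick p in M | p.1 == s] is Some p then p.2 else s.
have mu_edge s : s \in S -> exists2 p, p \in M & p.1 = s /\ mu s = p.2.
  move=> sS; rewrite /mu; case: pickP => [p /andP [pM /eqP <-]|none].
    by exists p.
  have [p pM] := sat s sS; rewrite !inE => /orP [/eqP sp|/eqP sp].
    by have := none p; rewrite pM -sp eqxx.
  by have [_ + _] := edges p pM; rewrite -sp (disjointFr disjST sS).
exists mu; split=> [s /mu_edge [p pM [<- ->]]|s /mu_edge [p pM [<- ->]]|].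
- by have [] := edges p pM.
- by have [] := edges p pM.
move=> s1 s2 /mu_edge [p1 p1M [<- ->]] /mu_edge [p2 p2M [<- ->]] eq2.
have [-> //|neq_p] := eqVneq p1 p2.
have := disj p1 p2 p1M p2M neq_p; rewrite disjoints_subset => /subsetP/(_ p1.2).
by rewrite !inE eqxx eq2 eqxx !orbT => /(_ isT).
Qed.

Lemma maxfix_split n q (e : rel 'I_n) (S : {set 'I_n}) (mu : 'I_n -> 'I_n) s0 :
  symmetric e -> s0 \in S -> {in S, forall s, mu s \in cset e S} ->
  {in S, forall s, e s (mu s)} -> {in S &, injective mu} -> 0 < q ->
  maxfix q e = q ^ #|S| * maxfix q (induced e (~: S)).
Proof.
move=> e_sym s0S mu_cset mu_adj mu_inj q_gt0.
have w0W : mu s0 \in ~: S by rewrite inE; case/csetP: (mu_cset s0 s0S).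
apply/eqP; rewrite eqn_leq (maxfix_le_split q e s0S w0W).
exact: (maxfix_ge_split s0S w0W e_sym mu_cset mu_adj mu_inj q_gt0).
Qed.

Section RealEntropy.

Local Open Scope R_scope.

Lemma INR_muln a b : INR (a * b)%N = INR a * INR b.
Proof. exact: mult_INR. Qed.

Lemma INR_expn a k : INR (a ^ k)%N = INR a ^ k.
Proof. by elim: k => [|k IHk]; rewrite ?expn0 // expnS INR_muln IHk. Qed.

Lemma ln_INR_gt0 q : (1 < q)%N -> 0 < ln (INR q).
Proof.
by move/ltP/lt_INR => q_gt1; rewrite -ln_1; apply: ln_increasing; [lra|exact: q_gt1].
Qed.

Lemma INR_maxfix_gt0 n q (e : rel 'I_n) : (1 < q)%N -> 0 < INR (maxfix q e).
Proof. by move=> q_gt1; apply/lt_0_INR/ltP/maxfix_gt0/ltnW. Qed.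

Lemma gn_expn_mul n m (e : rel 'I_n) (e' : rel 'I_m) k q : (1 < q)%N ->
  maxfix q e = (q ^ k * maxfix q e')%N -> gn e q = INR k + gn e' q.
Proof.
move=> q_gt1 split_e; have lnq := ln_INR_gt0 q_gt1.
have q_pos : 0 < INR q by apply/lt_0_INR/ltP/ltnW.
rewrite /gn split_e INR_muln INR_expn ln_mult ?ln_pow //.
- by field; lra.
- exact: pow_lt.
- exact: INR_maxfix_gt0.
Qed.

Lemma gn_le n (e : rel 'I_n) q : (1 < q)%N -> gn e q <= INR n.
Proof.
move=> q_gt1; have lnq := ln_INR_gt0 q_gt1.
have q_pos : 0 < INR q by apply/lt_0_INR/ltP/ltnW.
have M_le : INR (maxfix q e) <= INR q ^ n.
  by rewrite -INR_expn; apply/le_INR/leP/maxfix_le_expn.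
rewrite /gn; apply: (Rmult_le_reg_r _ _ _ lnq).
rewrite /Rdiv Rmult_assoc Rinv_l ?Rmult_1_r; last lra.
rewrite -ln_pow //; case: (Rle_lt_or_eq_dec _ _ M_le) => [lt|->]; last lra.
exact/Rlt_le/ln_increasing/lt/INR_maxfix_gt0.
Qed.

Lemma is_entropy_exists n (e : rel 'I_n) : exists h, is_entropy e h.
Proof.
pose E x := exists q : nat, (1 < q)%N /\ x = gn e q.
have bounded : bound E by exists (INR n) => x [q [q_gt1 ->]]; apply: gn_le.
have nonempty : exists x, E x by exists (gn e 2%N), 2%N.
by have [h] := completeness E bounded nonempty; exists h.
Qed.

Lemma is_entropy_shift n m (e : rel 'I_n) (e' : rel 'I_m) k h' :
  (forall q, (1 < q)%N -> gn e q = INR k + gn e' q) ->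
  is_entropy e' h' -> is_entropy e (h' + INR k).
Proof.
move=> gn_shift [ub least]; split=> [x [q [q_gt1 ->]]|b b_ub].
  by rewrite gn_shift //; have := ub _ (ex_intro _ q (conj q_gt1 erefl)); lra.
suff : h' <= b - INR k by lra.
apply: least => x [q [q_gt1 ->]].
by have := b_ub _ (ex_intro _ q (conj q_gt1 erefl)); rewrite gn_shift //; lra.
Qed.

Lemma frac_part_addINR h k : frac_part (h + INR k) = frac_part h.
Proof.
have [fp_ge0 fp_lt1] := base_fp h.
have decomp : h + INR k = IZR (Int_part h + Z.of_nat k) + frac_part h.
  by rewrite plus_IZR -INR_IZR_INZ {1}(Rplus_Int_part_frac_part h); ring.
by have [_ <-] := @Int_part_frac_part_spec _ _ _ (conj (Rge_le _ _ fp_ge0) fp_lt1) decomp.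
Qed.

End RealEntropy.

Theorem lemma3 (n : nat) (e : rel 'I_n) :
  simple_graph e -> entropy_minimal e ->
  forall S : {set 'I_n}, S != set0 ->
  ~ (exists M : {set 'I_n * 'I_n},
       bip_matching e S (cset e S) M /\ saturates M S).
Proof.
move=> simple minimal S S_neq0 [M [matching saturated]].
have [s0 s0S] := set0Pn _ S_neq0.
have [mu [mu_cset mu_adj mu_inj]] :=
  matching_injection (cset_disjoint e S) matching saturated.
have card_lt : #|~: S| < n.
  by rewrite -[X in _ < X](card_ord n) -(cardsC S) -[X in X < _]add0n ltn_add2r card_gt0.
have [h' ent'] := is_entropy_exists (induced e (~: S)).
have ent : is_entropy e (h' + INR #|S|).
  apply: is_entropy_shift ent' => q q_gt1; apply: gn_expn_mul => //.
  exact: (maxfix_split simple.1 s0S mu_cset mu_adj mu_inj (ltnW q_gt1)).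
apply: (minimal _ _ card_lt (induced_simple _ simple) _ _ ent ent').
by rewrite frac_part_addINR.
Qed.
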